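(* Let $k$ be an algebraically closed field of characteristic $0$, let $f$ be a nonconstant endomorphism of $\mathbb{P}^n_k$, and let $H\subset\mathbb{P}^n$ be a hypersurface. If every irreducible component of $H$ contains a (nonempty) preperiodic subvariety, then $H$ is dynamically improper under $f$.
   Context: An endomorphism of $\mathbb{P}^n$ is a morphism given by homogeneous forms of a common degree with no common nontrivial zero. A nonempty subvariety $X\subset\mathbb{P}^n$ is preperiodic under $f$ if for every irreducible component $Z$ of $X$ there exist distinct nonnegative integers $s,t$ with $f^s(Z)=f^t(Z)$. A hypersurface $H$ is improper under $f$ if for every irreducible component $Z$ of $H$ there exist integers $0\le i_0<\dots<i_n$ with $f^{i_0}(Z)\cap\dots\cap f^{i_n}(Z)\neq\varnothing$; it is dynamically improper under $f$ if it is improper under $f^r$ for every $r>0$. *)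

(* Classical projective geometry over
   an algebraically closed field k: points of P^n are represented by nonzero
   vectors v : 'I_(n.+1) -> k (homogeneous coordinates), and subsets of P^n by
   predicates on such vectors that are invariant under nonzero scaling. *)
From HB Require Import structures.
From mathcomp Require Import all_boot all_algebra.
From mathcomp Require Import mpoly.
Set Implicit Arguments. Unset Strict Implicit. Unset Printing Implicit Defensive.
Import GRing.Theory.
Local Open Scope ring_scope.

Section Proj.
Variables (k : fieldType) (n : nat).

Definition hvec := 'I_n.+1 -> k.
Definition nonzero (v : hvec) : Prop := exists i, v i != 0.

Definition pset := hvec -> Prop.
Definition psub (A B : pset) : Prop := forall v, A v -> B v.
Definition peq (A B : pset) : Prop := forall v, A v <-> B v.

Definition is_homog (p : {mpoly k[n.+1]}) : Prop := exists d : nat, p \is d.-homog.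

Definition zero_locus (S : {mpoly k[n.+1]} -> Prop) : pset :=
  fun v => nonzero v /\ forall p, S p -> p.@[v] = 0.

Definition zclosed (X : pset) : Prop :=
  exists S : {mpoly k[n.+1]} -> Prop,
    (forall p, S p -> is_homog p) /\ peq X (zero_locus S).

Definition subvariety (X : pset) : Prop := zclosed X /\ exists v, X v.

Definition zirreducible (Z : pset) : Prop :=
  zclosed Z /\ (exists v, Z v) /\
  forall A B : pset, zclosed A -> zclosed B ->
    psub Z (fun v => A v \/ B v) -> psub Z A \/ psub Z B.

Definition irr_component (X Z : pset) : Prop :=
  zirreducible Z /\ psub Z X /\
  forall Z', zirreducible Z' -> psub Z Z' -> psub Z' X -> psub Z' Z.

Definition hypersurface (H : pset) : Prop :=
  exists (p : {mpoly k[n.+1]}) (d : nat),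
    (0 < d)%N /\ p != 0 /\ p \is d.-homog /\ peq H (zero_locus (fun q => q = p)).

Definition endomorphism (F : 'I_n.+1 -> {mpoly k[n.+1]}) (d : nat) : Prop :=
  (forall i, F i \is d.-homog) /\
  (forall v : hvec, (forall i, (F i).@[v] = 0) -> forall i, v i = 0).

Definition pimage (F : 'I_n.+1 -> {mpoly k[n.+1]}) (Z : pset) : pset :=
  fun w => exists v mu, Z v /\ mu != 0 /\ forall i, w i = mu * (F i).@[v].

Definition piter (F : 'I_n.+1 -> {mpoly k[n.+1]}) (s : nat) (Z : pset) : pset :=
  iter s (pimage F) Z.

Definition preperiodic (F : 'I_n.+1 -> {mpoly k[n.+1]}) (X : pset) : Prop :=
  forall Z, irr_component X Z ->
    exists s t : nat, s <> t /\ peq (piter F s Z) (piter F t Z).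

Definition improper_iter (F : 'I_n.+1 -> {mpoly k[n.+1]}) (r : nat) (H : pset) : Prop :=
  forall Z, irr_component H Z ->
    exists idx : 'I_n.+1 -> nat,
      (forall a b : 'I_n.+1, (a < b)%N -> (idx a < idx b)%N) /\
      exists v, forall j : 'I_n.+1, piter F (r * idx j) Z v.

Definition dyn_improper (F : 'I_n.+1 -> {mpoly k[n.+1]}) (H : pset) : Prop :=
  forall r : nat, (0 < r)%N -> improper_iter F r H.

End Proj.

(* Only the dynamics is used: if a component W of a preperiodic subvariety
   satisfies f^s(W) = f^(s+p)(W) with p > 0, then f^s(W) = f^(s+cp)(W) for
   every c, so the points of f^((r-1)s)(f^s(W)) lie in every
   f^(r(s+jp))(W), hence in every f^(r(s+jp))(Z) for the component Z of H
   containing W.  The only geometric input is that a nonempty closed set has an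
   irreducible component, obtained by Zorn's lemma from maximal irreducible
   subsets, which are automatically closed. *)
From HB Require Import structures.
From mathcomp Require Import all_boot all_algebra.
From mathcomp Require Import mpoly.
From mathcomp Require classical_sets.
From mathcomp Require Import zify.
From Stdlib Require Import Classical.
Set Implicit Arguments.
Unset Strict Implicit.
Unset Printing Implicit Defensive.
Import GRing.Theory.
Local Open Scope ring_scope.

Lemma Zorn_subset (T : Type) (P : (T -> Prop) -> Prop) :
  (forall C : (T -> Prop) -> Prop, (forall X, C X -> P X) ->
     (forall A B, C A -> C B -> (forall x, A x -> B x) \/ (forall x, B x -> A x)) ->
     P (fun x => exists X, C X /\ X x)) ->
  exists A, P A /\ forall B, (forall x, A x -> B x) -> P B -> forall x, B x -> A x.
Proof.
move=> Pchain.
have [A [PA Amax]] : exists A, P A /\ (forall B, classical_sets.proper A B -> ~ P B).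
  apply: classical_sets.Zorn_bigcup => C CP Ctot.
  have -> : classical_sets.bigcup C id = (fun x => exists X, C X /\ X x).
    apply: boolp.funext => x; apply: boolp.propext.
    by split=> [[X CX Xx]|[X [CX Xx]]]; exists X.
  by apply: Pchain => // A B CA CB; apply: Ctot.
exists A; split => // B AB PB x Bx; apply: NNPP => nAx.
by apply: (Amax B) => //; split => // BA; apply/nAx/BA.
Qed.

Section Iterates.
Variables (k : fieldType) (n : nat) (F : 'I_n.+1 -> {mpoly k[n.+1]}).
Implicit Types (A B W : pset k n).

Lemma pimage_sub A B : psub A B -> psub (pimage F A) (pimage F B).
Proof. by move=> AB w [v [mu [Av muw]]]; exists v, mu; split => //; apply: AB. Qed.

Lemma piter_sub m A B : psub A B -> psub (piter F m A) (piter F m B).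
Proof. by move=> AB; elim: m => //= m; apply: pimage_sub. Qed.

Lemma piter_peq m A B : peq A B -> peq (piter F m A) (piter F m B).
Proof.
by move=> AB w; split; apply: piter_sub => v; case: (AB v).
Qed.

Lemma piterD a b A : piter F (a + b) A = piter F a (piter F b A).
Proof. exact: iterD. Qed.

Lemma piter_nonempty m A : (exists v, A v) -> exists v, piter F m A v.
Proof.
move=> A0; elim: m => [//|m [v Hv]] /=.
exists (fun i => (F i).@[v]), v, 1; split=> //; split; first exact: oner_neq0.
by move=> i; rewrite mul1r.
Qed.

Lemma piter_periodic s p W :
  peq (piter F s W) (piter F (s + p) W) ->
  forall c, peq (piter F s W) (piter F (s + c * p) W).
Proof.
move=> per; elim=> [|c IH] v; first by rewrite mul0n addn0.
have -> : (s + c.+1 * p = c * p + (s + p))%N by rewrite mulSn; lia.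
by rewrite (IH v) (addnC s) !(piterD (c * p)); apply: piter_peq per v.
Qed.

(* The indices s + j p, scaled by r, all land on the cycle of f^s(W) after the
   common offset (r - 1) s. *)
Lemma piter_cycle_common_point r s p W : (0 < r)%N ->
  (exists v, W v) -> peq (piter F s W) (piter F (s + p) W) ->
  exists v, forall j : nat, piter F (r * (s + j * p)) W v.
Proof.
move=> r0 W0 per; pose m0 := ((r - 1) * s)%N.
have [v Hv] := piter_nonempty (m0 + s) W0; exists v => j.
have -> : (r * (s + j * p) = m0 + (s + (r * j) * p))%N.
  have : (s <= r * s)%N by rewrite leq_pmull.
  rewrite /m0 mulnDr mulnA mulnBl mul1n; lia.
by rewrite piterD -(piter_peq m0 (piter_periodic per (r * j))) -piterD.
Qed.

End Iterates.

Section Components.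
Variables (k : fieldType) (n : nat).
Implicit Types (A B X : pset k n).

Definition zclosure A : pset k n :=
  zero_locus (fun p => is_homog p /\ forall v, A v -> p.@[v] = 0).

Lemma zclosure_closed A : zclosed (zclosure A).
Proof. by exists (fun p => is_homog p /\ forall v, A v -> p.@[v] = 0); split => // p []. Qed.

Lemma zclosure_min A B : zclosed B -> psub A B -> psub (zclosure A) B.
Proof.
move=> [S [Shom BS]] AB v [v0 Av]; apply/BS; split => // p Sp.
apply: Av; split; first exact: Shom.
by move=> w Aw; have [_ ->] := (BS w).1 (AB w Aw).
Qed.

Lemma sub_zclosure A : (forall v, A v -> nonzero v) -> psub A (zclosure A).
Proof. by move=> A0 v Av; split; [exact: A0 | move=> p [_ ->]]. Qed.

Definition irreducible_cover A := forall A1 A2 : pset k n, zclosed A1 -> zclosed A2 ->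
  psub A (fun v => A1 v \/ A2 v) -> psub A A1 \/ psub A A2.

Lemma irreducible_cover_zclosure A :
  (forall v, A v -> nonzero v) -> irreducible_cover A -> irreducible_cover (zclosure A).
Proof.
move=> A0 Airr A1 A2 c1 c2 cover.
have : psub A (fun v => A1 v \/ A2 v) by move=> v Av; apply/cover/sub_zclosure.
by case/(Airr A1 A2 c1 c2) => ?; [left | right]; apply: zclosure_min.
Qed.

Lemma irreducible_cover_chain (C : pset k n -> Prop) :
  (forall Y, C Y -> irreducible_cover Y) ->
  (forall A B, C A -> C B -> psub A B \/ psub B A) ->
  irreducible_cover (fun v => exists Y, C Y /\ Y v).
Proof.
move=> Cirr Ctot A1 A2 c1 c2 cover.
have coverY Y : C Y -> psub Y A1 \/ psub Y A2.
  by move=> CY; apply: Cirr => // v Yv; apply: cover; exists Y.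
case: (classic (forall Y, C Y -> psub Y A1)) => [all1|/not_all_ex_not [Y0]].
  by left => v [Y [CY Yv]]; apply: all1 CY _ Yv.
move=> /(imply_to_and (C Y0)) [CY0 nY0A1].
have Y0A2 : psub Y0 A2 by case: (coverY Y0 CY0).
right => v [Y [CY Yv]]; case: (coverY Y CY) => [YA1|]; last exact.
case: (Ctot Y Y0 CY CY0) => [YY0|Y0Y]; first exact/Y0A2/YY0.
by case: nY0A1 => w /Y0Y; apply: YA1.
Qed.

Lemma zclosed_nonzero X v : zclosed X -> X v -> nonzero v.
Proof. by move=> [S [_ XS]] /XS []. Qed.

Lemma exists_irr_component X : subvariety X -> exists W, irr_component X W.
Proof.
move=> [Xc [x Xx]].
pose P A := psub A X /\ irreducible_cover A.
have [A [[AX Airr] Amax]] : exists A, P A /\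
    forall B, (forall v, A v -> B v) -> P B -> forall v, B v -> A v.
  apply: Zorn_subset => C CP Ctot; split.
    by move=> v [Y [CY Yv]]; apply: (CP Y CY).1.
  by apply: irreducible_cover_chain => [Y /CP []|].
have A0 v : A v -> nonzero v by move/AX; apply: zclosed_nonzero.
have clA : psub (zclosure A) A.
  apply: Amax; first exact: sub_zclosure.
  by split; [apply: zclosure_min | apply: irreducible_cover_zclosure].
have Aclosed : zclosed A.
  have [S [Shom E]] := zclosure_closed A.
  exists S; split => // v; split => [/sub_zclosure Acl|/E /clA //].
  exact/E/Acl.
have Ax : exists v, A v.
  (* a maximal irreducible set cannot be empty: the singleton {x} is irreducible *)
  apply: NNPP => Aempty; apply: (Aempty); exists x; apply: (Amax (fun v => v = x)).
  - by move=> v Av; case: Aempty; exists v.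
  - split=> [v -> //|A1 A2 _ _ cover].
    by case: (cover x erefl) => ?; [left | right] => v ->.
  - by [].
exists A; split; first by split.
by split=> // Z' [_ [_ Z'irr]] AZ' Z'X; apply: Amax.
Qed.

End Components.

Theorem mainTheorem7 (k : closedFieldType) (n : nat)
  (F : 'I_n.+1 -> {mpoly k[n.+1]}) (d : nat) (H : pset k n) :
  [pchar k] =i pred0 ->
  endomorphism F d -> (0 < d)%N ->
  hypersurface H ->
  (forall Z, irr_component H Z ->
     exists X, subvariety X /\ psub X Z /\ preperiodic F X) ->
  dyn_improper F H.
Proof.
move=> _ _ _ _ HZpre r r0 Z HZ.
have [X [Xsub [XZ Xpre]]] := HZpre Z HZ.
have [W XW] := exists_irr_component Xsub.
have [[_ [W0 _]] [WX _]] := XW.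
have [s [t [st per]]] := Xpre W XW.
wlog lt_st : s t st per / (s < t)%N.
  move=> wl; case: (ltngtP s t) => [|ts|//]; first exact: wl.
  by apply: (wl t s) => // [/esym //|v]; split => /per.
have [p [p0 def_t]] : exists p, (0 < p)%N /\ t = (s + p)%N.
  by exists (t - s)%N; split; [rewrite subn_gt0 | lia].
rewrite {}def_t in per.
have [v Hv] := piter_cycle_common_point r0 W0 per.
exists (fun j : 'I_n.+1 => (s + j * p)%N); split.
  by move=> a b ab; rewrite ltn_add2l ltn_mul2r p0.
have WZ : psub W Z by move=> w /WX /XZ.
by exists v => j; exact: piter_sub WZ _ (Hv j).
Qed.
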